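(* Let $P_n$ be the path graph on vertices $1,2,\dots,n$ (edges $\{i,i+1\}$, $1\le i<n$), and consider the averaging process on $P_n$ started at the endpoint vector $v(0)=e_1$. For every fixed $\epsilon\in(0,1)$, the time $\min\{t\in\mathbb N:\mathbb E\|v(t)-\bar v\|_1\le\epsilon\}$ is $\Theta_\epsilon(n^3)$; i.e., it lies between $c_\epsilon n^3$ and $C_\epsilon n^3$ for constants $0<c_\epsilon\le C_\epsilon$ depending only on $\epsilon$.
   Context: The averaging process on a finite, undirected, connected graph $G=(V,E)$, $V=\{1,\dots,n\}$: the state vector $v(t)\in\mathbb R^n$, $t=0,1,2,\dots$, starts from a given $v(0)$; at each step $t\ge 1$ an edge $\{i,j\}\in E$ is chosen uniformly at random (independently of all previous choices) and both $v_i$ and $v_j$ are replaced by $(v_i+v_j)/2$, all other coordinates unchanged. Here $\bar v=\frac1n\mathbf 1$ and $e_1$ is the first standard basis vector. *)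

From mathcomp Require Import all_boot all_order all_algebra.
From mathcomp Require Import reals.
Set Implicit Arguments. Unset Strict Implicit. Unset Printing Implicit Defensive.
Import Order.TTheory GRing.Theory Num.Theory.
Local Open Scope ring_scope.

(* Path graph P_n: vertices 0,...,n-1 (paper's 1..n shifted by one),
   edges indexed by k < n-1, edge k = {k, k+1}.  State vectors are
   nat -> R, only coordinates < n are meaningful. *)

Section Averaging.
Variable R : realType.

Definition avg_step (k : nat) (v : nat -> R) : nat -> R :=
  fun i => if (i == k) || (i == k.+1) then (v k + v k.+1) / 2 else v i.

Definition avg_run (s : seq nat) (v : nat -> R) : nat -> R :=
  foldl (fun w k => avg_step k w) v s.

Definition e1 : nat -> R := fun i => if i == 0%N then 1 else 0.

Definition l1_dist_unif (n : nat) (v : nat -> R) : R :=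
  \sum_(i < n) `| v i - n%:R^-1 |.

(* E || v(t) - vbar ||_1 for the averaging process on P_n started at e_1:
   the t edges are i.i.d. uniform on the n-1 edges, so the expectation is
   the uniform average over all t-tuples of edges. *)
Definition path_exp_dist (n t : nat) : R :=
  (\sum_(s : t.-tuple 'I_n.-1) l1_dist_unif n (avg_run (map val s) e1))
    / ((n.-1)%:R ^+ t).

Definition is_path_mixing_time (n : nat) (eps : R) (T : nat) : Prop :=
  path_exp_dist n T <= eps /\ (forall t, (t < T)%N -> eps < path_exp_dist n t).

End Averaging.

From mathcomp Require Import all_boot all_order all_algebra.
From mathcomp Require Import reals.
From mathcomp Require Import ring lra zify.
Import Order.TTheory GRing.Theory Num.Theory.
Local Open Scope ring_scope.

(* Upper bound: one step lowers the expected squared distance f = |v - 1/n|_2^2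
   by D(v)/(2(n-1)), where D is the Dirichlet form of the path.  A Nash
   inequality gives f^3 <= 400 D for probability vectors, so by Jensen
   g_t = E f(v(t)) satisfies g_(t+1) <= g_t - g_t^3/(800(n-1)), whence
   g_t^2 = O(n/t); with |x|_1^2 <= n |x|_2^2 this yields
   E |v(t) - 1/n|_1 = O((n^3/t)^(1/4)).
   Lower bound: the second moment M(v) = sum_i i^2 v_i grows by at most 1/(n-1)
   per step in expectation, and testing v - 1/n against the function equal to
   1 - 2 i^2/b^2 below b and to -1 above gives |v - 1/n|_1 >= 2 - 2M/b^2 - 2b/n;
   with b about n/K the distance stays above 2 - 4/K while t <= n^3/(8 K^3). *)

Section UniformMean.
Context {R : realFieldType} {T : finType}.

Definition mean (F : T -> R) : R := (\sum_x F x) / #|T|%:R.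

Lemma eq_mean (F G : T -> R) : F =1 G -> mean F = mean G.
Proof. by move=> FG; rewrite /mean (eq_bigr _ (fun x _ => FG x)). Qed.

Lemma meanD (F G : T -> R) : mean (fun x => F x + G x) = mean F + mean G.
Proof. by rewrite /mean big_split mulrDl. Qed.

Lemma meanZ (a : R) (F : T -> R) : mean (fun x => a * F x) = a * mean F.
Proof. by rewrite /mean -mulr_sumr mulrA. Qed.

Lemma mean_cst (c : R) : (0 < #|T|)%N -> mean (fun=> c) = c.
Proof.
by move=> T0; rewrite /mean sumr_const -[c *+ _]mulr_natr mulfK // pnatr_eq0 -lt0n.
Qed.

Lemma ler_mean (F G : T -> R) : (forall x, F x <= G x) -> mean F <= mean G.
Proof.
move=> FG; rewrite /mean ler_wpM2r ?invr_ge0 ?ler0n //.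
by apply: ler_sum => x _; apply: FG.
Qed.

Lemma mean_ge0 (F : T -> R) : (forall x, 0 <= F x) -> 0 <= mean F.
Proof.
by move=> F0; rewrite /mean divr_ge0 ?ler0n // sumr_ge0 // => x _; apply: F0.
Qed.

(* Both Jensen inequalities integrate a tangent line of the convex function at the mean. *)
Lemma mean_sqr_le (F : T -> R) : (0 < #|T|)%N ->
  mean F ^+ 2 <= mean (fun x => F x ^+ 2).
Proof.
move=> T0; set mu := mean F.
have -> : mu ^+ 2 = mean (fun x => 2 * mu * F x - mu ^+ 2).
  by rewrite meanD meanZ mean_cst // -/mu; ring.
by apply: ler_mean => x; have := sqr_ge0 (F x - mu); nra.
Qed.

Lemma mean_cube_le (F : T -> R) : (0 < #|T|)%N -> (forall x, 0 <= F x) ->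
  mean F ^+ 3 <= mean (fun x => F x ^+ 3).
Proof.
move=> T0 F0; have mu0 := mean_ge0 _ F0; set mu := mean F in mu0 *.
have -> : mu ^+ 3 = mean (fun x => 3 * mu ^+ 2 * F x - 2 * mu ^+ 3).
  by rewrite meanD meanZ mean_cst // -/mu; ring.
apply: ler_mean => x; have := F0 x => Fx0.
have : 0 <= (F x - mu) ^+ 2 * (F x + 2 * mu) by rewrite mulr_ge0 ?sqr_ge0 //; lra.
by nra.
Qed.

End UniformMean.

Lemma big_tuple_rcons (V : nmodType) (I : finType) t (G : seq I -> V) :
  \sum_(s : t.+1.-tuple I) G s = \sum_(s : t.-tuple I) \sum_(k : I) G (rcons s k).
Proof.
rewrite pair_big /=.
pose split_last (s : t.+1.-tuple I) :=
  ([tuple of belast (thead s) (behead s)], last (thead s) (behead s)).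
rewrite (reindex (fun p => rcons_tuple p.1 p.2)) //=.
exists split_last => [[s k] _ | s _]; rewrite /split_last /=.
- have := lastI (thead (rcons_tuple s k)) (behead (rcons_tuple s k)).
  rewrite -[_ :: _](congr1 val (tuple_eta (rcons_tuple s k))) /=.
  by move=> /rcons_inj[Es Ek]; congr pair => //; apply: val_inj; rewrite /= -Es.
- by apply: val_inj; rewrite [RHS](congr1 val (tuple_eta s)) /= lastI.
Qed.

Lemma mean_tuple_rcons {R : realFieldType} {I : finType} t (G : seq I -> R) :
  mean (fun s : t.+1.-tuple I => G s) =
  mean (fun s : t.-tuple I => mean (fun k : I => G (rcons s k))).
Proof.
rewrite /mean !card_tuple big_tuple_rcons -mulr_suml expnSr natrM invfM.
by rewrite mulrA mulrAC.
Qed.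

Section SumOfSquares.
Context {R : realFieldType} {I : finType}.

Lemma sum_sqr_diffs (a : I -> R) :
  \sum_i \sum_j (a i - a j) ^+ 2 =
  2 * (#|I|%:R * \sum_i a i ^+ 2 - (\sum_i a i) ^+ 2).
Proof.
set S := \sum_i a i; set Q := \sum_i a i ^+ 2.
have row_sum i : \sum_j (a i - a j) ^+ 2 = #|I|%:R * a i ^+ 2 - 2 * a i * S + Q.
  rewrite (eq_bigr (fun j => a i ^+ 2 - 2 * a i * a j + a j ^+ 2)) => [|j _]; last by ring.
  by rewrite big_split sumrB /= sumr_const -mulr_sumr -[_ *+ _]mulr_natl -/S -/Q.
rewrite (eq_bigr _ (fun i _ => row_sum i)) big_split sumrB /= sumr_const.
rewrite -mulr_suml -!mulr_sumr -[_ *+ _]mulr_natl -/S -/Q; ring.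
Qed.

Lemma sqr_sum_le (a : I -> R) :
  (\sum_i a i) ^+ 2 <= #|I|%:R * \sum_i a i ^+ 2.
Proof.
have : 0 <= \sum_i \sum_j (a i - a j) ^+ 2.
  by apply: sumr_ge0 => i _; apply: sumr_ge0 => j _; apply: sqr_ge0.
by rewrite sum_sqr_diffs pmulr_rge0 // subr_ge0.
Qed.

End SumOfSquares.

Section PathDirichlet.
Context {R : realFieldType}.
Implicit Types (w : nat -> R) (n : nat).

Definition dirichlet n w : R := \sum_(k < n.-1) (w k - w k.+1) ^+ 2.

Lemma dirichlet_ge0 n w : 0 <= dirichlet n w.
Proof. by apply: sumr_ge0 => k _; apply: sqr_ge0. Qed.

Lemma sum_subrange_le (f : nat -> R) a b m : (forall k, 0 <= f k) ->
  (a <= b <= m)%N -> \sum_(a <= k < b) f k <= \sum_(k < m) f k.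
Proof.
move=> f0 /andP[ab bm]; have am := leq_trans ab bm.
rewrite -(big_mkord xpredT f) (@big_cat_nat _ _ _ a 0 m) //= (@big_cat_nat _ _ _ b a m) //=.
by rewrite addrCA lerDl addr_ge0 // sumr_ge0.
Qed.

Lemma sqr_sub_le_dirichlet n w i j : (i <= j < n)%N ->
  (w i - w j) ^+ 2 <= (j - i)%:R * dirichlet n w.
Proof.
move=> /andP[ij jn].
have shift (g : nat -> R) : \sum_(i <= k < j) g k = \sum_(k < j - i) g (k + i)%N.
  by rewrite -{1}[i]add0n big_addn big_mkord.
have -> : w i - w j = \sum_(k < j - i) (w (k + i)%N - w (k + i).+1).
  rewrite -(shift (fun k => w k - w k.+1)) -[w i - w j]opprB -(telescope_sumr w ij) -sumrN.
  by apply: eq_bigr => k _; rewrite opprB.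
apply: le_trans (sqr_sum_le _) _; rewrite card_ord ler_wpM2l //.
rewrite -(shift (fun k => (w k - w k.+1) ^+ 2)).
apply: sum_subrange_le => [k|]; first exact: sqr_ge0.
by rewrite ij /=; case: n jn {ij} => // n.
Qed.

Lemma sqr_sub_le_dirichlet_near n w r i j : (i < n)%N -> (j < n)%N ->
  (i <= j + r)%N -> (j <= i + r)%N -> (w i - w j) ^+ 2 <= r%:R * dirichlet n w.
Proof.
wlog ij : i j / (i <= j)%N => [sym in_ jn ijr jir|in_ jn _ jir].
  case: (leqP i j) => [ij|ji]; first exact: sym.
  by rewrite -sqrrN opprB; apply: sym => //; apply: ltnW.
apply: (le_trans (sqr_sub_le_dirichlet n w _ _ _)); first by rewrite ij.
by rewrite ler_wpM2r ?dirichlet_ge0 // ler_nat leq_subLR.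
Qed.

Lemma poincare_path {n w} : \sum_(i < n) w i = 0 ->
  2 * \sum_(i < n) w i ^+ 2 <= n%:R ^+ 2 * dirichlet n w.
Proof.
case: n => [|n] w0; first by rewrite big_ord0 mulr0 expr0n mul0r.
set N := n.+1%:R; set E := dirichlet n.+1 w.
have sum_le : \sum_(i < n.+1) \sum_(j < n.+1) (w i - w j) ^+ 2 <= N * (N * (N * E)).
  have -> : N * (N * (N * E)) = \sum_(i < n.+1) \sum_(j < n.+1) (N * E).
    by rewrite !sumr_const !card_ord !mulr_natl.
  apply: ler_sum => i _; apply: ler_sum => j _.
  by apply: sqr_sub_le_dirichlet_near; rewrite ?ltn_ord // ltnW // ltn_addl.
move: sum_le; rewrite sum_sqr_diffs w0 card_ord expr0n subr0 -/N.
have N0 : 0 < N by rewrite ltr0n.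
by rewrite -mulrA (mulrCA 2) ler_pM2l // mulrA -expr2.
Qed.

Lemma window_sqr_le n w r i0 : (r <= n)%N -> (i0 < n)%N ->
  r%:R * w i0 ^+ 2 <= 2 * \sum_(i < n) w i ^+ 2 + 2 * r%:R ^+ 2 * dirichlet n w.
Proof.
move=> rn i0n; set a := minn i0 (n - r); set E := dirichlet n w.
have near j : (a <= j < a + r)%N -> w i0 ^+ 2 <= 2 * w j ^+ 2 + 2 * (r%:R * E).
  move=> /andP[aj jar].
  have : (w i0 - w j) ^+ 2 <= r%:R * E.
    by apply: sqr_sub_le_dirichlet_near; move: aj jar; rewrite /a; clear E a; lia.
  by move=> near_ij; have := sqr_ge0 (w i0 - 2 * w j); lra.
have := ler_sum_nat near; rewrite big_split /= !sumr_const_nat addKn -mulr_sumr.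
rewrite -(mulr_natl (w i0 ^+ 2)) -(mulr_natl (2 * (r%:R * E))) => window_le.
have : \sum_(a <= j < a + r) w j ^+ 2 <= \sum_(i < n) w i ^+ 2.
  apply: sum_subrange_le => [k|]; first exact: sqr_ge0.
  by rewrite leq_addr /a; clear E a near window_le; lia.
by lra.
Qed.

Lemma sum_sqr_le_max_norm {n w m} : (forall i, (i < n)%N -> `|w i| <= m) ->
  \sum_(i < n) w i ^+ 2 <= m * \sum_(i < n) `|w i|.
Proof.
move=> le_m; rewrite mulr_sumr; apply: ler_sum => i _.
by rewrite -real_normK ?num_real // expr2 ler_wpM2r ?le_m.
Qed.

(* With M the peak and L the l1 norm, take the least r with 4 L <= r M: the
   window inequality at the peak then forces L M <= r^2 E, and r M < 5 L. *)
Lemma nash_peaked {n w i0} : (i0 < n)%N -> (forall i, (i < n)%N -> `|w i| <= `|w i0|) ->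
  4 * \sum_(i < n) `|w i| <= n%:R * `|w i0| ->
  `|w i0| ^+ 3 <= 25 * dirichlet n w * \sum_(i < n) `|w i|.
Proof.
move=> i0n max_i0 peak.
set M := `|w i0| in max_i0 peak *; set L := \sum_(i < n) `|w i| in peak *.
set E := dirichlet n w; have E0 : 0 <= E := dirichlet_ge0 n w.
have M_le : M <= L by rewrite /L (bigD1 (Ordinal i0n)) //= lerDl sumr_ge0.
have [M0|M_gt0] := eqVneq M 0.
  by rewrite M0 expr0n mulr_ge0 ?mulr_ge0 // (le_trans _ M_le) // M0.
have {M_gt0}M_gt0 : 0 < M by rewrite lt_def M_gt0 normr_ge0.
have L_gt0 : 0 < L := lt_le_trans M_gt0 M_le.
have [r r_peak r_min] := ex_minnP (ex_intro (fun r => 4 * L <= r%:R * M) n peak).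
have r_gt0 : (0 < r)%N.
  by rewrite lt0n; apply: contraTneq r_peak => ->; rewrite mul0r -ltNge pmulr_rgt0.
have r_lt : r%:R * M < 5 * L.
  have : (r.-1)%:R * M < 4 * L.
    by rewrite ltNge; apply/negP => /r_min; rewrite leqNgt ltn_predL r_gt0.
  by rewrite -(prednK r_gt0) -natr1; lra.
have window := window_sqr_le _ w _ _ (r_min n peak) i0n.
rewrite -(real_normK (num_real (w i0))) -/M -/E in window.
have F_le : \sum_(i < n) w i ^+ 2 <= M * L := sum_sqr_le_max_norm max_i0.
have LM_le : L * M <= r%:R ^+ 2 * E.
  have : 4 * L * M <= r%:R * M ^+ 2 by rewrite expr2 mulrA ler_wpM2r // ltW.
  by lra.
clearbody M L E.
have rM_sqr : (r%:R * M) ^+ 2 <= (5 * L) ^+ 2.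
  by rewrite lerXn2r ?nnegrE ?mulr_ge0 ?ler0n ?ltW // ltW.
rewrite -(ler_pM2l L_gt0) (_ : L * M ^+ 3 = L * M * M ^+ 2); last by ring.
rewrite (_ : L * (25 * E * L) = (5 * L) ^+ 2 * E); last by ring.
apply: le_trans (_ : _ <= r%:R ^+ 2 * E * M ^+ 2) _; first by rewrite ler_wpM2r ?sqr_ge0.
by rewrite -mulrA mulrCA -exprMn mulrC ler_wpM2r.
Qed.

Lemma nash_path n w : \sum_(i < n) w i = 0 ->
  (\sum_(i < n) w i ^+ 2) ^+ 3 <= 25 * dirichlet n w * (\sum_(i < n) `|w i|) ^+ 4.
Proof.
case: n => [|n] w0; first by rewrite !big_ord0 !expr0n /= mulr0.
have [i0 _ max_i0] := @real_arg_maxP _ _ (ord0 : 'I_n.+1) xpredT (fun i => `|w i|)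
  isT (fun i _ => normr_real (w i)).
have {}max_i0 i : (i < n.+1)%N -> `|w i| <= `|w i0|.
  by move=> lt_i; apply: (max_i0 (Ordinal lt_i)).
have poinc := poincare_path w0.
have F_le := sum_sqr_le_max_norm max_i0.
have E0 := dirichlet_ge0 n.+1 w.
set F := \sum_(i < n.+1) w i ^+ 2 in poinc F_le *; set E := dirichlet n.+1 w in poinc E0 *.
set L := \sum_(i < n.+1) `|w i| in F_le *; set M := `|w i0| in max_i0 F_le.
set N := n.+1%:R in poinc *.
have F0 : 0 <= F by rewrite sumr_ge0 // => i _; apply: sqr_ge0.
have L0 : 0 <= L by rewrite sumr_ge0.
have N_gt0 : 0 < N by rewrite ltr0n.
case: (ltP (N * M) (4 * L)) => [flat|peaked].
  have NF : N * F <= 4 * L ^+ 2.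
    apply: le_trans (_ : N * (M * L) <= _); first by rewrite ler_pM2l.
    by rewrite mulrA expr2 mulrA ler_wpM2r // ltW.
  have NF2 : (N * F) ^+ 2 <= (4 * L ^+ 2) ^+ 2.
    by rewrite lerXn2r ?nnegrE ?mulr_ge0 ?ler0n ?sqr_ge0 // ltW.
  rewrite -(ler_pM2l (exprn_gt0 2 N_gt0)).
  have := ler_pM (mulr_ge0 (ler0n _ 2) F0) (sqr_ge0 _) poinc NF2.
  have := mulr_ge0 (mulr_ge0 (sqr_ge0 N) E0) (exprn_ge0 4 L0).
  by clearbody F E L M N; lra.
have M_peak : M ^+ 3 <= 25 * E * L := nash_peaked (ltn_ord i0) max_i0 peaked.
apply: le_trans (_ : (M * L) ^+ 3 <= _).
  by rewrite lerXn2r ?nnegrE ?mulr_ge0 ?normr_ge0.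
rewrite exprMn (_ : 25 * E * L ^+ 4 = 25 * E * L * L ^+ 3); last by ring.
by rewrite ler_wpM2r ?exprn_ge0.
Qed.

End PathDirichlet.

Lemma sum_odd_mul_diff {R : realFieldType} (v : nat -> R) m :
  \sum_(k < m) (2 * k%:R + 1) * (v k - v k.+1) =
  2 * \sum_(k < m) v k - v 0%N - (2 * m%:R - 1) * v m.
Proof.
elim: m => [|m IH]; first by rewrite !big_ord0; ring.
by rewrite !big_ord_recr /= IH -natr1; ring.
Qed.

Section AveragingStep.
Context {R : realType} (n : nat).
Implicit Types (v : nat -> R) (k : nat).

Definition prob_vec v := (forall i, 0 <= v i) /\ \sum_(i < n) v i = 1.

Definition sqdist_unif v := \sum_(i < n) (v i - n%:R^-1) ^+ 2.

Definition moment2 v := \sum_(i < n) i%:R ^+ 2 * v i.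

Lemma sqdist_unif_ge0 v : 0 <= sqdist_unif v.
Proof. by rewrite sumr_ge0 // => i _; apply: sqr_ge0. Qed.

Lemma sum_avg_step (G : nat -> R -> R) k v : (k.+1 < n)%N ->
  \sum_(i < n) G i (avg_step k v i) = \sum_(i < n) G i (v i) +
    (G k ((v k + v k.+1) / 2) + G k.+1 ((v k + v k.+1) / 2) - G k (v k) - G k.+1 (v k.+1)).
Proof.
move=> k1n; have kn := ltnW k1n.
rewrite -[LHS](subrK (\sum_(i < n) G i (v i))) -sumrB addrC; congr (_ + _).
rewrite (bigD1 (Ordinal kn)) //= (bigD1 (Ordinal k1n)) /=; last first.
  by rewrite -val_eqE /= eq_sym neq_ltn ltnSn.
rewrite big1 => [|i /andP[/negPf ik /negPf ik1]]; last first.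
  by rewrite /avg_step -!val_eqE /= in ik ik1 *; rewrite ik ik1 subrr.
by rewrite /avg_step !eqxx orbT /= addr0; ring.
Qed.

Lemma sum_avg_step_id k v : (k.+1 < n)%N ->
  \sum_(i < n) avg_step k v i = \sum_(i < n) v i.
Proof.
move=> k1n; rewrite (sum_avg_step (fun _ x => x)) // -[RHS]addr0.
by congr (_ + _); field.
Qed.

Lemma prob_vec_avg_step k v : (k.+1 < n)%N -> prob_vec v -> prob_vec (avg_step k v).
Proof.
move=> k1n [v0 v1]; split; last by rewrite sum_avg_step_id.
by move=> i; rewrite /avg_step; case: ifP => // _; rewrite divr_ge0 ?addr_ge0.
Qed.

Lemma prob_vec_e1 : (0 < n)%N -> prob_vec (e1 R).
Proof.
move=> n_gt0; split=> [i|]; first by rewrite /e1; case: ifP.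
by case: n n_gt0 => // m _; rewrite big_ord_recl /= /e1 eqxx big1 ?addr0.
Qed.

Lemma prob_vec_avg_run (s : seq nat) v :
  all (fun k => k.+1 < n)%N s -> prob_vec v -> prob_vec (avg_run s v).
Proof.
elim: s v => [|k s IH] v //= /andP[k1n s_n] pv.
exact/IH/prob_vec_avg_step.
Qed.

Lemma sqdist_avg_step k v : (k.+1 < n)%N ->
  sqdist_unif (avg_step k v) = sqdist_unif v - (v k - v k.+1) ^+ 2 / 2.
Proof.
move=> k1n; rewrite /sqdist_unif (sum_avg_step (fun _ x => (x - n%:R^-1) ^+ 2)) //.
by congr (_ + _); move: (n%:R^-1 : R) => u; field.
Qed.

Lemma moment2_avg_step k v : (k.+1 < n)%N ->
  moment2 (avg_step k v) = moment2 v + (2 * k%:R + 1) * (v k - v k.+1) / 2.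
Proof.
move=> k1n; rewrite /moment2 (sum_avg_step (fun i x => i%:R ^+ 2 * x)) // -natr1.
by field.
Qed.

Lemma edge_lt (k : 'I_n.-1) : (k.+1 < n)%N.
Proof. by move: (ltn_ord k); lia. Qed.

Lemma mean_sqdist_avg_step v : (1 < n)%N ->
  mean (fun k : 'I_n.-1 => sqdist_unif (avg_step k v)) =
  sqdist_unif v - dirichlet n v / (2 * (n.-1)%:R).
Proof.
move=> n_gt1; have m_gt0 : 0 < (n.-1)%:R :> R by rewrite ltr0n; lia.
rewrite /mean card_ord (eq_bigr _ (fun (k : 'I_n.-1) _ => sqdist_avg_step k v (edge_lt k))).
rewrite sumrB sumr_const card_ord -mulr_suml -[_ *+ _]mulr_natr.
by rewrite /dirichlet; field; rewrite lt0r_neq0.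
Qed.

Lemma mean_moment2_avg_step v : (1 < n)%N -> prob_vec v ->
  mean (fun k : 'I_n.-1 => moment2 (avg_step k v)) <= moment2 v + (n.-1)%:R^-1.
Proof.
move=> n_gt1 [v0 v1]; have m_gt0 : 0 < (n.-1)%:R :> R by rewrite ltr0n; lia.
rewrite /mean card_ord (eq_bigr _ (fun (k : 'I_n.-1) _ => moment2_avg_step k v (edge_lt k))).
rewrite big_split /= sumr_const card_ord -[_ *+ _]mulr_natr -mulr_suml sum_odd_mul_diff.
rewrite ler_pdivrMr // [X in _ <= X]mulrDl mulVf ?lt0r_neq0 //.
have : \sum_(k < n.-1) v k <= 1.
  rewrite -v1 -(big_mkord xpredT v); apply: sum_subrange_le => //; lia.
have m_ge1 : 0 <= (n.-1)%:R - 1 :> R by rewrite subr_ge0 ler1n; lia.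
have := mulr_ge0 m_ge1 (v0 n.-1).
by have := v0 0%N; have := v0 n.-1; lra.
Qed.

End AveragingStep.

Definition path_exp {R : realType} (n t : nat) (F : (nat -> R) -> R) : R :=
  mean (fun s : t.-tuple 'I_n.-1 => F (avg_run (map val s) (e1 R))).

Section PathExpectation.
Context {R : realType} {n : nat} (n_gt1 : (1 < n)%N).
Implicit Types (F G : (nat -> R) -> R) (t : nat).

Lemma path_exp_distE t : path_exp_dist R n t = path_exp n t (l1_dist_unif n).
Proof. by rewrite /path_exp_dist /path_exp /mean card_tuple card_ord natrX. Qed.

Lemma path_exp0 F : path_exp n 0 F = F (e1 R).
Proof.
rewrite /path_exp (@eq_mean _ _ _ (fun=> F (e1 R))) => [|s]; last by rewrite tuple0.
by rewrite mean_cst // card_tuple.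
Qed.

Lemma path_expS t F :
  path_exp n t.+1 F = path_exp n t (fun v => mean (fun k : 'I_n.-1 => F (avg_step k v))).
Proof.
rewrite /path_exp (mean_tuple_rcons _ (fun s => F (avg_run (map val s) (e1 R)))).
by apply: eq_mean => s; apply: eq_mean => k; rewrite map_rcons /avg_run foldl_rcons.
Qed.

Lemma card_paths_gt0 t : (0 < #|{: t.-tuple 'I_n.-1}|)%N.
Proof. by rewrite card_tuple card_ord expn_gt0; apply/orP; left; lia. Qed.

Lemma prob_vec_path t (s : t.-tuple 'I_n.-1) : prob_vec n (avg_run (map val s) (e1 R)).
Proof.
apply: prob_vec_avg_run; last by apply: prob_vec_e1; lia.
by apply/allP => _ /mapP[k _ ->]; apply: edge_lt.
Qed.

Lemma ler_path_exp t F G : (forall v, prob_vec n v -> F v <= G v) ->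
  path_exp n t F <= path_exp n t G.
Proof. by move=> FG; apply: ler_mean => s; apply/FG/prob_vec_path. Qed.

Lemma path_exp_ge0 t F : (forall v, prob_vec n v -> 0 <= F v) -> 0 <= path_exp n t F.
Proof. by move=> F0; apply: mean_ge0 => s; apply/F0/prob_vec_path. Qed.

Lemma path_expD t F G : path_exp n t (fun v => F v + G v) = path_exp n t F + path_exp n t G.
Proof. exact: meanD. Qed.

Lemma path_expZ t a F : path_exp n t (fun v => a * F v) = a * path_exp n t F.
Proof. exact: meanZ. Qed.

Lemma path_exp_cst t (c : R) : path_exp n t (fun=> c) = c.
Proof. exact/mean_cst/card_paths_gt0. Qed.

Lemma path_exp_sqr_le t F : path_exp n t F ^+ 2 <= path_exp n t (fun v => F v ^+ 2).
Proof. exact/mean_sqr_le/card_paths_gt0. Qed.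

Lemma path_exp_cube_le t F : (forall v, prob_vec n v -> 0 <= F v) ->
  path_exp n t F ^+ 3 <= path_exp n t (fun v => F v ^+ 3).
Proof. by move=> F0; apply: mean_cube_le (card_paths_gt0 t) _ => s; apply/F0/prob_vec_path. Qed.

End PathExpectation.

(* Discrete form of x' = - a x^3, whose solutions satisfy x^-2 = x0^-2 + 2 a t. *)
Lemma cubic_decay {R : realFieldType} {x : nat -> R} {a : R} : 0 < a ->
  (forall t, 0 <= x t) -> (forall t, x t.+1 <= x t - a * x t ^+ 3) ->
  forall t, x t ^+ 2 * (2 * a * t%:R) <= 1.
Proof.
move=> a_gt0 x0 x_dec; elim=> [|t IH]; first by rewrite !mulr0 ler01.
have [xt0|xt_gt0] := eqVneq (x t) 0.
  have -> : x t.+1 = 0.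
    by apply/eqP; rewrite eq_le x0 andbT (le_trans (x_dec t)) // xt0 expr0n /= mulr0 subr0.
  by rewrite expr0n mul0r ler01.
have {xt_gt0}xt_gt0 : 0 < x t by rewrite lt_def xt_gt0 x0.
set s := a * x t ^+ 2.
have s0 : 0 <= s by rewrite mulr_ge0 ?sqr_ge0 ?ltW.
have dec : x t.+1 <= x t * (1 - s).
  by rewrite (_ : x t * _ = x t - a * x t ^+ 3) ?x_dec // /s; ring.
have s1 : s <= 1.
  by rewrite -subr_ge0 -(pmulr_rge0 _ xt_gt0) (le_trans (x0 t.+1)).
have sqr_dec : x t.+1 ^+ 2 <= x t ^+ 2 * (1 - s) ^+ 2.
  by rewrite -exprMn lerXn2r ?nnegrE ?mulr_ge0 ?subr_ge0 ?x0.
have z0 : 0 <= 2 * a * (t%:R + 1) by rewrite !mulr_ge0 ?addr_ge0 ?ler0n ?ler01 ?ltW.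
rewrite -[t.+1%:R]natr1; apply: le_trans (ler_wpM2r z0 sqr_dec) _.
have -> : x t ^+ 2 * (1 - s) ^+ 2 * (2 * a * (t%:R + 1)) =
          (1 - s) ^+ 2 * (x t ^+ 2 * (2 * a * t%:R)) + 2 * s * (1 - s) ^+ 2.
  by rewrite /s; ring.
have s3 : 0 <= 3 - 2 * s by lra.
have := ler_wpM2l (sqr_ge0 (1 - s)) IH; rewrite mulr1.
by have := mulr_ge0 (sqr_ge0 s) s3; clearbody s; lra.
Qed.

Section UpperBound.
Context {R : realType} (n : nat).
Hypothesis n_gt1 : (1 < n)%N.
Implicit Types (v : nat -> R).

Let n_gt0 : 0 < n%:R :> R. Proof. by rewrite ltr0n; lia. Qed.
Let m_gt0 : 0 < (n.-1)%:R :> R. Proof. by rewrite ltr0n; lia. Qed.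

Lemma l1_dist_unif_le2 v : prob_vec n v -> l1_dist_unif n v <= 2.
Proof.
move=> [v0 v1]; apply: le_trans (_ : \sum_(i < n) (v i + n%:R^-1) <= _).
  apply: ler_sum => i _; apply: le_trans (ler_normB _ _) _.
  by rewrite !ger0_norm ?v0 ?invr_ge0 ?ler0n.
by rewrite big_split /= v1 sumr_const card_ord -[_ *+ n]mulr_natl divff ?lt0r_neq0.
Qed.

Lemma sqr_l1_dist_unif_le v : l1_dist_unif n v ^+ 2 <= n%:R * sqdist_unif n v.
Proof.
rewrite /sqdist_unif (eq_bigr (fun i : 'I_n => `|v i - n%:R^-1| ^+ 2)) => [|i _].
  by have := sqr_sum_le (fun i : 'I_n => `|v i - n%:R^-1|); rewrite card_ord.
by rewrite real_normK ?num_real.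
Qed.

Lemma sqdist_cube_le_dirichlet v : prob_vec n v -> sqdist_unif n v ^+ 3 <= 400 * dirichlet n v.
Proof.
move=> pv; have [_ v1] := pv.
have w0 : \sum_(i < n) (v i - n%:R^-1) = 0.
  by rewrite sumrB v1 sumr_const card_ord -[_ *+ n]mulr_natl divff ?lt0r_neq0 ?subrr.
have := nash_path n (fun i => v i - n%:R^-1) w0.
rewrite (_ : dirichlet n _ = dirichlet n v); last by apply: eq_bigr => k _; congr (_ ^+ 2); ring.
move=> /le_trans; apply; rewrite -/(l1_dist_unif n v).
have L4 : l1_dist_unif n v ^+ 4 <= 2 ^+ 4.
  by rewrite lerXn2r ?nnegrE ?l1_dist_unif_le2 ?sumr_ge0.
by have := ler_wpM2l (dirichlet_ge0 n v) L4; lra.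
Qed.

Lemma path_exp_sqdist_decay t :
  path_exp n t.+1 (@sqdist_unif R n) <=
  path_exp n t (@sqdist_unif R n) -
    (800 * (n.-1)%:R)^-1 * path_exp n t (@sqdist_unif R n) ^+ 3.
Proof.
set a := (800 * (n.-1)%:R)^-1; have a_ge0 : 0 <= a by rewrite invr_ge0 mulr_ge0 ?ltW.
have step v : prob_vec n v -> mean (fun k : 'I_n.-1 => sqdist_unif n (avg_step k v)) <=
    sqdist_unif n v + - a * sqdist_unif n v ^+ 3.
  move=> pv; rewrite mean_sqdist_avg_step //.
  have := ler_wpM2l a_ge0 (sqdist_cube_le_dirichlet _ pv).
  rewrite (_ : a * (400 * _) = dirichlet n v / (2 * (n.-1)%:R)); last first.
    by rewrite /a; field; rewrite lt0r_neq0.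
  by lra.
rewrite path_expS //; apply: le_trans (ler_path_exp n_gt1 _ _ _ step) _.
rewrite path_expD path_expZ mulNr lerD2l lerN2 ler_wpM2l //.
by apply: path_exp_cube_le => // v _; apply: sqdist_unif_ge0.
Qed.

Lemma path_exp_dist_upper t : path_exp_dist R n t ^+ 4 * t%:R <= 400 * n%:R ^+ 3.
Proof.
set g := fun t => path_exp n t (@sqdist_unif R n).
have a_gt0 : 0 < (800 * (n.-1)%:R)^-1 :> R by rewrite invr_gt0 mulr_gt0.
have g0 t' : 0 <= g t' by apply: path_exp_ge0 => // v _; apply: sqdist_unif_ge0.
have decay := cubic_decay a_gt0 g0 path_exp_sqdist_decay t.
rewrite path_exp_distE //; set D := path_exp n t (l1_dist_unif n).
have D0 : 0 <= D by apply: path_exp_ge0 => // v _; apply: sumr_ge0.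
have D_sqr : D ^+ 2 <= n%:R * g t.
  apply: le_trans (path_exp_sqr_le n_gt1 _ _) _.
  rewrite -path_expZ; apply: ler_path_exp => // v _; apply: sqr_l1_dist_unif_le.
have D4 : D ^+ 4 <= n%:R ^+ 2 * g t ^+ 2.
  rewrite (_ : 4 = 2 * 2)%N // exprM -exprMn.
  by rewrite lerXn2r ?nnegrE ?sqr_ge0 // mulr_ge0 ?ler0n ?g0.
have gt2 : g t ^+ 2 * t%:R <= 400 * (n.-1)%:R.
  move: decay; rewrite (_ : _ * (2 * _ * _) = g t ^+ 2 * t%:R / (400 * (n.-1)%:R)).
    by rewrite ler_pdivrMr ?mul1r // mulr_gt0.
  by field; rewrite lt0r_neq0.
have m_le : (n.-1)%:R <= n%:R :> R by rewrite ler_nat leq_pred.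
have := ler_wpM2r (ler0n R t) D4.
have := ler_wpM2l (sqr_ge0 (n%:R : R)) gt2; have := ler_wpM2l (sqr_ge0 (n%:R : R)) m_le.
by lra.
Qed.

End UpperBound.

Lemma sum_sign_cut {R : numDomainType} n b : (b <= n)%N ->
  \sum_(i < n) (if (i < b)%N then 1 else -1 : R) = 2 * b%:R - n%:R.
Proof.
move=> bn; rewrite -(big_mkord xpredT (fun i => if (i < b)%N then 1 else -1 : R)).
rewrite (@big_cat_nat _ _ _ b 0 n) //=.
rewrite (@eq_big_nat _ _ _ 0 b _ (fun=> 1)) => [|i /andP[_ ->]] //.
rewrite (@eq_big_nat _ _ _ b n _ (fun=> -1)) => [|i /andP[/leq_gtF ->]] //.
by rewrite !sumr_const_nat subn0 mulNrn natrB //; ring.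
Qed.

Section LowerBound.
Context {R : realType} (n : nat).
Hypothesis n_gt1 : (1 < n)%N.
Implicit Types (v : nat -> R).

Lemma moment2_e1 : moment2 n (e1 R) = 0.
Proof.
rewrite /moment2 big1 // => i _.
by rewrite /e1; case: eqP => [->|_]; rewrite ?expr0n ?mul0r ?mulr0.
Qed.

Lemma path_exp_moment2_le t : path_exp n t (@moment2 R n) <= t%:R / (n.-1)%:R.
Proof.
elim: t => [|t IH]; first by rewrite path_exp0 moment2_e1 mul0r.
have step v : prob_vec n v -> mean (fun k : 'I_n.-1 => moment2 n (avg_step k v)) <=
    moment2 n v + (n.-1)%:R^-1 := mean_moment2_avg_step n v n_gt1.
rewrite path_expS; apply: le_trans (ler_path_exp n_gt1 _ _ _ step) _.
by rewrite path_expD path_exp_cst // -natr1 mulrDl mul1r lerD2r.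
Qed.

Lemma l1_dist_unif_ge v b : (0 < b <= n)%N -> prob_vec n v ->
  2 - 2 * moment2 n v / b%:R ^+ 2 - 2 * b%:R / n%:R <= l1_dist_unif n v.
Proof.
move=> /andP[b_gt0 bn] [v0 v1].
have b2_gt0 : 0 < b%:R ^+ 2 :> R by rewrite exprn_gt0 // ltr0n.
have n_gt0 : 0 < n%:R :> R by rewrite ltr0n; lia.
pose q i : R := i%:R ^+ 2 / b%:R ^+ 2.
have q0 i : 0 <= q i by rewrite divr_ge0 ?sqr_ge0 ?ltW.
have q_lt1 i : (i < b)%N -> q i <= 1.
  by move=> ib; rewrite ler_pdivrMr // mul1r lerXn2r ?nnegrE ?ler0n // ler_nat ltnW.
have q_ge1 i : (b <= i)%N -> 1 <= q i.
  by move=> bi; rewrite ler_pdivlMr // mul1r lerXn2r ?nnegrE ?ler0n // ler_nat.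
pose g i : R := if (i < b)%N then 1 - 2 * q i else -1.
have g_norm i : `|g i| <= 1.
  by rewrite ler_norml /g; case: ltnP => [/q_lt1|_]; have := q0 i; lra.
have g_ge i : 1 - 2 * q i <= g i.
  by rewrite /g; case: ltnP => [_|/q_ge1]; lra.
have g_le i : g i <= if (i < b)%N then 1 else -1.
  by rewrite /g; case: ltnP => _ //; have := q0 i; lra.
have test : \sum_(i < n) g i * (v i - n%:R^-1) <= l1_dist_unif n v.
  apply: ler_sum => i _; rewrite (le_trans (ler_norm _)) // normrM.
  by rewrite ler_piMl ?normr_ge0.
apply: le_trans test; rewrite (eq_bigr (fun i : 'I_n => g i * v i - n%:R^-1 * g i)); last first.
  by move=> i _; ring.
rewrite sumrB -mulr_sumr.
have : \sum_(i < n) (1 - 2 * q i) * v i <= \sum_(i < n) g i * v i.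
  by apply: ler_sum => i _; rewrite ler_wpM2r.
have : \sum_(i < n) g i <= 2 * b%:R - n%:R.
  by rewrite -sum_sign_cut //; apply: ler_sum => i _.
have -> : \sum_(i < n) (1 - 2 * q i) * v i = 1 - 2 * moment2 n v / b%:R ^+ 2.
  rewrite (eq_bigr (fun i : 'I_n => v i - 2 / b%:R ^+ 2 * (i%:R ^+ 2 * v i))) => [|i _].
    by rewrite sumrB -mulr_sumr v1 /moment2; ring.
  by rewrite /q; ring.
have ninv0 : 0 <= n%:R^-1 :> R by rewrite invr_ge0 ltW.
move=> /(ler_wpM2l ninv0).
rewrite (_ : n%:R^-1 * (2 * b%:R - n%:R) = 2 * b%:R / n%:R - 1); last by field; rewrite lt0r_neq0.
by lra.
Qed.

Lemma path_exp_dist_lower t b : (0 < b <= n)%N ->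
  2 - 2 * t%:R / ((n.-1)%:R * b%:R ^+ 2) - 2 * b%:R / n%:R <= path_exp_dist R n t.
Proof.
move=> b_range; have b_gt0 : 0 < b%:R :> R by rewrite ltr0n; case/andP: b_range.
have m_gt0 : 0 < (n.-1)%:R :> R by rewrite ltr0n; lia.
have affine v : prob_vec n v ->
    - (2 / b%:R ^+ 2) * moment2 n v + (2 - 2 * b%:R / n%:R) <= l1_dist_unif n v.
  by move=> pv; have := l1_dist_unif_ge v b b_range pv; lra.
rewrite path_exp_distE //; apply: le_trans (ler_path_exp n_gt1 _ _ _ affine).
rewrite path_expD path_expZ path_exp_cst //.
have c_ge0 : 0 <= 2 / b%:R ^+ 2 :> R by rewrite divr_ge0 ?ler0n ?sqr_ge0.
have := ler_wpM2l c_ge0 (path_exp_moment2_le t).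
rewrite (_ : 2 / b%:R ^+ 2 * (t%:R / (n.-1)%:R) = 2 * t%:R / ((n.-1)%:R * b%:R ^+ 2)).
  by lra.
by field; rewrite !lt0r_neq0.
Qed.

End LowerBound.

Lemma first_time_le {R : realDomainType} {d : nat -> R} {eps L : R} {U : nat} :
  d U <= eps -> (forall t, t%:R < L -> eps < d t) ->
  exists T, (d T <= eps /\ forall t, (t < T)%N -> eps < d t) /\ L <= T%:R /\ (T <= U)%N.
Proof.
move=> dU early; have [T dT T_min] := ex_minnP (ex_intro (fun t => d t <= eps) U dU).
exists T; split; [split=> // t tT | split; last exact: T_min].
  by rewrite ltNge; apply/negP => /T_min; rewrite leqNgt tT.
by rewrite leNgt; apply/negP => /early; rewrite ltNge dT.
Qed.

Lemma path_exp_dist_gt_window {R : realType} {delta : R} {K n t : nat} (b : nat) :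
  0 < delta -> 1 <= delta * K%:R -> (1 < n)%N -> (0 < b)%N ->
  (b * K <= n < 2 * b * K)%N ->
  t%:R * (8 * K%:R ^+ 3) < n%:R ^+ 3 :> R -> 2 - 4 * delta < path_exp_dist R n t.
Proof.
move=> delta_gt0 deltaK n_gt1 b_gt0 /andP[bK_le n_lt] t_small.
have K_gt0 : (0 < K)%N by rewrite lt0n; apply: contraTneq deltaK => ->; rewrite mulr0 ler10.
have b_range : (0 < b <= n)%N by rewrite b_gt0 (leq_trans (leq_pmulr _ K_gt0)).
have lower := @path_exp_dist_lower R n n_gt1 t b b_range.
have n_gt0 : 0 < n%:R :> R by rewrite ltr0n; lia.
have m_gt0 : 0 < (n.-1)%:R :> R by rewrite ltr0n; lia.
have K_gt0' : 0 < K%:R :> R by rewrite ltr0n.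
have b_gt0' : 0 < b%:R :> R by rewrite ltr0n.
have bKR : b%:R * K%:R <= n%:R :> R by rewrite -natrM ler_nat.
have nR : n%:R < 2 * b%:R * K%:R :> R by rewrite -!natrM ltr_nat.
have nmR : n%:R <= 2 * (n.-1)%:R :> R by rewrite -natrM ler_nat; lia.
have b_small : 2 * b%:R / n%:R <= 2 * delta.
  rewrite ler_pdivrMr //.
  have := ler_wpM2l (ler0n R b) deltaK; have := ler_wpM2l (ltW delta_gt0) bKR.
  by lra.
have n3 : n%:R ^+ 3 < 8 * (n.-1)%:R * b%:R ^+ 2 * K%:R ^+ 2 :> R.
  have sq : n%:R ^+ 2 < (2 * b%:R * K%:R) ^+ 2 :> R by rewrite ltrXn2r ?ler0n.
  have := ler_wpM2r (sqr_ge0 (n%:R : R)) nmR.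
  have : 2 * (n.-1)%:R * n%:R ^+ 2 < 2 * (n.-1)%:R * (2 * b%:R * K%:R) ^+ 2 :> R.
    by rewrite ltr_pM2l ?mulr_gt0.
  by lra.
have tK : t%:R * K%:R < (n.-1)%:R * b%:R ^+ 2 :> R.
  by rewrite -(ltr_pM2r (mulr_gt0 (ltr0n R 8) (exprn_gt0 2 K_gt0'))); lra.
have t_small' : 2 * t%:R / ((n.-1)%:R * b%:R ^+ 2) < 2 * delta.
  rewrite ltr_pdivrMr ?mulr_gt0 ?exprn_gt0 //.
  have : delta * (t%:R * K%:R) < delta * ((n.-1)%:R * b%:R ^+ 2) by rewrite ltr_pM2l.
  by have := ler_wpM2l (ler0n R t) deltaK; lra.
by lra.
Qed.

Lemma path_exp_dist_gt_early {R : realType} {delta : R} {K n t : nat} :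
  0 < delta -> 1 <= delta * K%:R -> (1 < n)%N -> (0 < t)%N ->
  t%:R * (8 * K%:R ^+ 3) < n%:R ^+ 3 :> R -> 2 - 4 * delta < path_exp_dist R n t.
Proof.
move=> delta_gt0 deltaK n_gt1 t_gt0 t_small.
have K_gt0 : (0 < K)%N by rewrite lt0n; apply: contraTneq deltaK => ->; rewrite mulr0 ler10.
have Kn : (K <= n)%N.
  rewrite -(ler_nat R) -(ler_pXn2r (ltn0Sn 2)) ?nnegrE ?ler0n // ltW // (le_lt_trans _ t_small) //.
  have t1 : 0 <= t%:R - 1 :> R by rewrite subr_ge0 ler1n.
  by have := mulr_ge0 t1 (exprn_ge0 3 (ler0n R K)); have := exprn_ge0 3 (ler0n R K); lra.
apply: (@path_exp_dist_gt_window R delta K n t (n %/ K)) => //; first by rewrite divn_gt0.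
by rewrite leq_divM /= (leq_trans (ltn_ceil _ K_gt0)) // leq_mul2r -addn1; lia.
Qed.

Lemma path_mixing_lower {R : realType} {eps : R} : eps < 1 ->
  exists2 c : R, 0 < c <= 1 &
    forall n t, (1 < n)%N -> t%:R < c * n%:R ^+ 3 -> eps < path_exp_dist R n t.
Proof.
move=> eps_lt1; set delta := (2 - eps) / 8.
have delta_gt0 : 0 < delta by rewrite divr_gt0 //; lra.
have delta_inv0 : 0 <= delta^-1 by rewrite invr_ge0 ltW.
set K := Num.bound delta^-1.
have deltaK : 1 <= delta * K%:R.
  by have := archi_boundP delta_inv0; rewrite -/K -div1r ltr_pdivrMr // mulrC => /ltW.
have K_ge1 : 1 <= K%:R :> R.
  by rewrite ler1n -(ltr0n R) (le_lt_trans delta_inv0) // archi_boundP.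
have K3 : 1 <= 8 * K%:R ^+ 3 :> R by have := exprn_ege1 3 K_ge1; lra.
exists (8 * K%:R ^+ 3)^-1; first by rewrite invr_gt0 invf_le1 ?(lt_le_trans ltr01) ?K3.
move=> n t n_gt1; rewrite [_^-1 * _]mulrC ltr_pdivlMr ?(lt_le_trans ltr01 K3) //.
case: (posnP t) => [-> _ | t_gt0 t_small].
  have := @path_exp_dist_lower R n n_gt1 0 1 (ltnW n_gt1).
  rewrite mulr0n mulr0 mul0r subr0 mulr1 => lower.
  have n_ge2 : 2 <= n%:R :> R by rewrite ler_nat.
  have : 2 / n%:R <= 1 :> R by rewrite ler_pdivrMr ?mul1r ?(lt_le_trans _ n_ge2).
  by lra.
have := path_exp_dist_gt_early delta_gt0 deltaK n_gt1 t_gt0 t_small.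
by rewrite /delta; lra.
Qed.

Lemma path_mixing_upper {R : realType} {eps : R} : 0 < eps ->
  exists2 C : nat, (0 < C)%N &
    forall n, (1 < n)%N -> path_exp_dist R n (C * n ^ 3) <= eps.
Proof.
move=> eps_gt0; have e4_gt0 : 0 < eps ^+ 4 := exprn_gt0 4 eps_gt0.
have C0 : 0 <= 400 / eps ^+ 4 by rewrite divr_ge0 ?ler0n ?ltW.
set C := Num.bound (400 / eps ^+ 4); have C_big := archi_boundP C0; rewrite -/C in C_big.
have C_gt0 : (0 < C)%N by rewrite -(ltr0n R) (le_lt_trans C0).
exists C => // n n_gt1.
have Cn3_gt0 : 0 < (C * n ^ 3)%:R :> R by rewrite ltr0n muln_gt0 C_gt0 expn_gt0; lia.
have D0 : 0 <= path_exp_dist R n (C * n ^ 3).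
  by rewrite path_exp_distE //; apply: path_exp_ge0 => // v _; apply: sumr_ge0.
rewrite -(ler_pXn2r (ltn0Sn 3)) ?nnegrE ?(ltW eps_gt0) // -(ler_pM2r Cn3_gt0).
apply: le_trans (path_exp_dist_upper _ n_gt1 _) _.
move: C_big; rewrite ltr_pdivrMr // natrM natrX => C_big.
by have := ler_wpM2r (exprn_ge0 3 (ler0n R n)) (ltW C_big); lra.
Qed.

Theorem proposition7 (R : realType) (eps : R) :
  0 < eps < 1 ->
  exists c C : R, 0 < c /\ c <= C /\
    forall n : nat, (2 <= n)%N ->
      exists T : nat, is_path_mixing_time n eps T /\
        c * n%:R ^+ 3 <= T%:R /\ T%:R <= C * n%:R ^+ 3.
Proof.
move=> /andP[eps_gt0 eps_lt1].
have [c /andP[c_gt0 c_le1] early] := path_mixing_lower eps_lt1.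
have [C C_gt0 late] := path_mixing_upper eps_gt0.
exists c, C%:R; split=> //; split; first by rewrite (le_trans c_le1) // ler1n.
move=> n n_gt1.
have [T [mixing [lower upper]]] := first_time_le (late n n_gt1) (fun t => early n t n_gt1).
by exists T; split=> //; split=> //; rewrite -natrX -natrM ler_nat.
Qed.
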